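(* For every $n\ge 2$ there exist nonnegative numbers $\gamma_{n,i}$ such that $$\mathcal{A}_n^{(2)}(t):=\sum_{k=0}^{n-1}\mathcal{A}^{(2)}(n,k)\,t^k=\sum_{i=0}^{\lfloor (n-1)/2\rfloor}\gamma_{n,i}\,t^i(1+t)^{n-1-2i}.$$
   Context: A subexceedant function on $[n]$ is a map $f:[n]\to[n]$ with $1\le f(i)\le i$; its block leader set is $\mathrm{bl}(f)=\{i\in[n]: f(i)\notin f(\{1,\dots,i-1\})\}$. $\mathcal{A}^{(2)}(n,k)$ is the number of pairs $(f_1,f_2)$ of subexceedant functions on $[n]$ with $|\mathrm{bl}(f_1)|=k+1$ and $\mathrm{bl}(f_1)=\mathrm{bl}(f_2)$. *)

From HB Require Import structures.
From mathcomp Require Import all_boot all_order all_algebra.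
Set Implicit Arguments. Unset Strict Implicit. Unset Printing Implicit Defensive.
Import Order.TTheory GRing.Theory Num.Theory.

(* [n] = {1,...,n} is represented 0-indexed by 'I_n (element i stands for i+1).
   A subexceedant function f : [n] -> [n], 1 <= f(i) <= i, becomes
   f : 'I_n -> 'I_n with f i <= i. *)
Definition subexceedant (n : nat) (f : {ffun 'I_n -> 'I_n}) : bool :=
  [forall i, (f i <= i)%N].

Definition block_leaders (n : nat) (f : {ffun 'I_n -> 'I_n}) : {set 'I_n} :=
  [set i | f i \notin f @: [set j : 'I_n | (j < i)%N]].

Definition A2 (n k : nat) : nat :=
  #|[set p : {ffun 'I_n -> 'I_n} * {ffun 'I_n -> 'I_n} |
      [&& subexceedant p.1, subexceedant p.2,
          #|block_leaders p.1| == k.+1 &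
          block_leaders p.1 == block_leaders p.2]]|.

(* Extending a subexceedant function on [m] by a value v at m+1 makes m+1 a
   block leader iff v is outside the image, which has exactly |bl| elements.
   Hence the number B(m,u) of pairs with a common block-leader set of size u
   satisfies B(m+1,u+1) = (m+1-u)^2 B(m,u) + (u+1)^2 B(m,u+1).  In terms of
   P_m(t) = sum_k B(m,k+1) t^k this reads P_(m+1) = (D+1)^2 P_m + t (D-m)^2 P_m
   with D = t d/dt, and this operator maps t^i (1+t)^(m-1-2i) to a combination
   with nonnegative coefficients of t^i (1+t)^(m-2i) and t^(i+1) (1+t)^(m-2-2i).
   So the gamma-coefficients obey a recurrence with nonnegative coefficients. *)

From HB Require Import structures.
From mathcomp Require Import all_boot all_order all_algebra.
From mathcomp Require Import ring zify.
Import Order.TTheory GRing.Theory Num.Theory.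

Lemma mem_block_leaders {m} (f : {ffun 'I_m -> 'I_m}) i :
  (i \in block_leaders f) = [forall j : 'I_m, (j < i)%N ==> (f j != f i)].
Proof.
rewrite inE; apply/negP/forallP => [notin j | fresh /imsetP [j]].
- by apply/implyP => lt_ji; apply/eqP => eq_f; apply: notin; rewrite -eq_f imset_f ?inE.
- by rewrite inE => lt_ji eq_f; move: (fresh j); rewrite lt_ji eq_f eqxx.
Qed.

Lemma image_block_leaders {m} (f : {ffun 'I_m -> 'I_m}) :
  f @: setT = f @: block_leaders f.
Proof.
apply/eqP; rewrite eqEsubset [X in _ && X]imsetS ?subsetT // andbT.
apply/subsetP => _ /imsetP [x _ ->]; have [k] := ubnP x.
elim: k x => // k IHk x lt_xk.
have [x_bl | ] := boolP (x \in block_leaders f); first exact: imset_f.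
rewrite mem_block_leaders negb_forall => /existsP [j].
rewrite negb_imply negbK => /andP [lt_jx /eqP <-].
by apply: IHk; exact: leq_trans lt_jx _.
Qed.

Lemma card_image_block_leaders {m} (f : {ffun 'I_m -> 'I_m}) :
  #|f @: setT| = #|block_leaders f|.
Proof.
rewrite image_block_leaders; apply: card_in_imset => x y.
rewrite !mem_block_leaders => /forallP x_bl /forallP y_bl eq_f.
case: (ltngtP x y) => [lt_xy | lt_yx | /val_inj //].
- by move: (y_bl x); rewrite lt_xy eq_f eqxx.
- by move: (x_bl y); rewrite lt_yx eq_f eqxx.
Qed.

Lemma forall_ord_max {m} (P : pred 'I_m.+1) :
  [forall i, P i] = P ord_max && [forall j : 'I_m, P (lift ord_max j)].
Proof.
apply/forallP/andP => [P_all | [P_max /forallP P_lift] i].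
  by split=> //; apply/forallP.
by case: (unliftP ord_max i) => [j ->|->].
Qed.

Lemma card_ord_max {m} (A : {set 'I_m.+1}) :
  #|A| = ((ord_max \in A) + #|[set j : 'I_m | lift ord_max j \in A]|)%N.
Proof.
rewrite (cardsD1 ord_max); congr (_ + _)%N.
suff -> : A :\ ord_max = lift ord_max @: [set j | lift ord_max j \in A].
  by rewrite card_imset //; exact: lift_inj.
apply/setP => i; rewrite !inE; case: (unliftP ord_max i) => [j ->|->].
  by rewrite eq_sym (negbTE (neq_lift _ _)) mem_imset ?inE //; exact: lift_inj.
by rewrite eqxx; apply/esym/imsetP => -[j _ /eqP]; rewrite (negbTE (neq_lift _ _)).
Qed.

Lemma sum_nat_pred (T : finType) (P : pred T) (F : bool -> nat) :
  \sum_x F (P x) = (F true * #|[set x | P x]| + F false * #|[set x | ~~ P x]|)%N.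
Proof.
rewrite (bigID P) /= (eq_bigr (fun=> F true)) => [|x ->] //.
rewrite [X in (_ + X)%N](eq_bigr (fun=> F false)) => [|x /negbTE -> //].
by rewrite !sum_nat_cond_const mulnC [X in (_ + X)%N]mulnC.
Qed.

Definition ffun_extend {m} (g : {ffun 'I_m -> 'I_m}) (v : 'I_m.+1) :
    {ffun 'I_m.+1 -> 'I_m.+1} :=
  [ffun i => if unlift ord_max i is Some j then lift ord_max (g j) else v].

Lemma ffun_extend_lift {m} (g : {ffun 'I_m -> 'I_m}) v j :
  ffun_extend g v (lift ord_max j) = lift ord_max (g j).
Proof. by rewrite ffunE liftK. Qed.

Lemma ffun_extend_max {m} (g : {ffun 'I_m -> 'I_m}) v : ffun_extend g v ord_max = v.
Proof. by rewrite ffunE unlift_none. Qed.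

Definition ffun_restrict {m} (f : {ffun 'I_m.+1 -> 'I_m.+1}) : {ffun 'I_m -> 'I_m} :=
  [ffun j => insubd j (nat_of_ord (f (lift ord_max j)))].

Lemma subexceedant_extend {m} (g : {ffun 'I_m -> 'I_m}) v :
  subexceedant (ffun_extend g v) = subexceedant g.
Proof.
rewrite /subexceedant forall_ord_max ffun_extend_max leq_ord; apply: eq_forallb => j.
by rewrite ffun_extend_lift !lift_max.
Qed.

Lemma ffun_restrictK {m} (g : {ffun 'I_m -> 'I_m}) v :
  ffun_restrict (ffun_extend g v) = g.
Proof.
by apply/ffunP => j; apply: ord_inj; rewrite ffunE ffun_extend_lift val_insubd lift_max ltn_ord.
Qed.

Lemma ffun_extendK {m} (f : {ffun 'I_m.+1 -> 'I_m.+1}) : subexceedant f ->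
  ffun_extend (ffun_restrict f) (f ord_max) = f.
Proof.
move=> /forallP f_sub; apply/ffunP => i; case: (unliftP ord_max i) => [j ->|->].
  rewrite ffun_extend_lift; apply: ord_inj; rewrite lift_max ffunE val_insubd.
  by rewrite (leq_ltn_trans (f_sub _)) // lift_max.
by rewrite ffun_extend_max.
Qed.

Lemma sum_subexceedant_extend {m} (F : {ffun 'I_m.+1 -> 'I_m.+1} -> nat) :
  \sum_(f | subexceedant f) F f =
  \sum_(g : {ffun 'I_m -> 'I_m} | subexceedant g) \sum_(v : 'I_m.+1) F (ffun_extend g v).
Proof.
rewrite (pair_big_dep _ (fun _ _ => true) (fun g v => F (ffun_extend g v))) /=.
rewrite (reindex_onto (fun p => ffun_extend p.1 p.2) (fun f => (ffun_restrict f, f ord_max))).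
  apply: eq_bigl => -[g v] /=.
  by rewrite subexceedant_extend ffun_extend_max ffun_restrictK eqxx !andbT.
exact: ffun_extendK.
Qed.

Definition fresh_value {m} (g : {ffun 'I_m -> 'I_m}) (v : 'I_m.+1) : bool :=
  [forall j, lift ord_max (g j) != v].

Lemma card_stale_values {m} (g : {ffun 'I_m -> 'I_m}) :
  #|[set v | ~~ fresh_value g v]| = #|block_leaders g|.
Proof.
have -> : [set v | ~~ fresh_value g v] = lift ord_max @: (g @: setT).
  apply/setP => v; rewrite inE negb_forall -imset_comp.
  apply/existsP/imsetP => [[j /negPn /eqP <-] | [j _ ->]]; first by exists j.
  by exists j; rewrite negbK.
by rewrite card_imset ?card_image_block_leaders //; exact: lift_inj.
Qed.

Lemma card_fresh_values {m} (g : {ffun 'I_m -> 'I_m}) :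
  #|[set v | fresh_value g v]| = (m.+1 - #|block_leaders g|)%N.
Proof.
have := cardsC [set v | fresh_value g v]; rewrite card_ord.
have -> : ~: [set v | fresh_value g v] = [set v | ~~ fresh_value g v].
  by apply/setP => v; rewrite !inE.
by rewrite card_stale_values; lia.
Qed.

Lemma block_leaders_extend_lift {m} (g : {ffun 'I_m -> 'I_m}) v (j : 'I_m) :
  (lift ord_max j \in block_leaders (ffun_extend g v)) = (j \in block_leaders g).
Proof.
rewrite !mem_block_leaders forall_ord_max ffun_extend_max ffun_extend_lift.
have le_j_max : (j <= @ord_max m)%N by exact: ltnW.
rewrite ltnNge lift_max le_j_max -[~~ true]/false implyFb andTb; apply: eq_forallb => j0.
by rewrite ffun_extend_lift !lift_max (inj_eq (@lift_inj _ ord_max)).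
Qed.

Lemma block_leaders_extend_max {m} (g : {ffun 'I_m -> 'I_m}) v :
  (ord_max \in block_leaders (ffun_extend g v)) = fresh_value g v.
Proof.
rewrite mem_block_leaders forall_ord_max ltnn implyFb andTb; apply: eq_forallb => j.
by rewrite ffun_extend_lift ffun_extend_max lift_max ltn_ord.
Qed.

Lemma card_block_leaders_extend {m} (g : {ffun 'I_m -> 'I_m}) v :
  #|block_leaders (ffun_extend g v)| = (#|block_leaders g| + fresh_value g v)%N.
Proof.
rewrite card_ord_max block_leaders_extend_max addnC; congr (_ + _)%N.
by apply: eq_card => j; rewrite inE block_leaders_extend_lift.
Qed.

Lemma eq_block_leaders_extend {m} (g1 g2 : {ffun 'I_m -> 'I_m}) v1 v2 :
  (block_leaders (ffun_extend g1 v1) == block_leaders (ffun_extend g2 v2)) =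
  (block_leaders g1 == block_leaders g2) && (fresh_value g1 v1 == fresh_value g2 v2).
Proof.
apply/eqP/andP => [eq_bl | [/eqP eq_bl /eqP eq_fresh]].
  split; last by rewrite -!block_leaders_extend_max eq_bl.
  apply/eqP/setP => j.
  by rewrite -(block_leaders_extend_lift g1 v1) eq_bl block_leaders_extend_lift.
apply/setP => i; case: (unliftP ord_max i) => [j ->|->].
  by rewrite !block_leaders_extend_lift eq_bl.
by rewrite !block_leaders_extend_max eq_fresh.
Qed.

Definition bl_pairs m u : nat :=
  \sum_(f1 : {ffun 'I_m -> 'I_m} | subexceedant f1)
   \sum_(f2 : {ffun 'I_m -> 'I_m} | subexceedant f2)
     ((#|block_leaders f1| == u) && (block_leaders f1 == block_leaders f2)).

Lemma A2_bl_pairs m k : A2 m k = bl_pairs m k.+1.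
Proof.
rewrite /A2 -sum1dep_card /bl_pairs pair_big_dep /=.
rewrite (eq_bigl (fun p => (subexceedant p.1 && subexceedant p.2) &&
  ((#|block_leaders p.1| == k.+1) && (block_leaders p.1 == block_leaders p.2)))).
  by rewrite big_mkcondr; apply: eq_bigr => p _; case: ifP.
by move=> p; rewrite !andbA.
Qed.

Lemma sum_extend_pairs {m} (g1 g2 : {ffun 'I_m -> 'I_m}) u :
  \sum_(v1 : 'I_m.+1) \sum_(v2 : 'I_m.+1)
     ((#|block_leaders (ffun_extend g1 v1)| == u) &&
      (block_leaders (ffun_extend g1 v1) == block_leaders (ffun_extend g2 v2))) =
  ((block_leaders g1 == block_leaders g2) *
   ((#|block_leaders g1|.+1 == u) * (m.+1 - #|block_leaders g1|) ^ 2 +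
    (#|block_leaders g1| == u) * #|block_leaders g1| ^ 2))%N.
Proof.
under eq_bigr do under eq_bigr do
  rewrite card_block_leaders_extend eq_block_leaders_extend.
have [eq_bl | neq_bl] := eqVneq (block_leaders g1) (block_leaders g2); last first.
  by rewrite big1 // => v1 _; rewrite big1 // => v2 _; rewrite andbF.
set k := #|block_leaders g1|.
under eq_bigr => v1 _ do rewrite (sum_nat_pred _ (fresh_value g2)
  (fun b => (k + fresh_value g1 v1 == u) && (true && (fresh_value g1 v1 == b)))).
rewrite (sum_nat_pred _ (fresh_value g1) (fun b1 =>
  ((k + b1 == u) && (true && (b1 == true))) * #|[set v | fresh_value g2 v]| +
  ((k + b1 == u) && (true && (b1 == false))) * #|[set v | ~~ fresh_value g2 v]|)).
rewrite !card_stale_values !card_fresh_values -eq_bl -/k /= addn1 addn0 mul1n.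
by case: (k.+1 == u); case: (k == u); rewrite /= ?mul0n ?mul1n ?muln0 ?addn0 ?add0n -?mulnn.
Qed.

Lemma bl_pairs_succ m u : bl_pairs m.+1 u =
  \sum_(g1 : {ffun 'I_m -> 'I_m} | subexceedant g1)
   \sum_(g2 : {ffun 'I_m -> 'I_m} | subexceedant g2)
     ((block_leaders g1 == block_leaders g2) *
      ((#|block_leaders g1|.+1 == u) * (m.+1 - #|block_leaders g1|) ^ 2 +
       (#|block_leaders g1| == u) * #|block_leaders g1| ^ 2))%N.
Proof.
rewrite /bl_pairs sum_subexceedant_extend; apply: eq_bigr => g1 _.
under eq_bigr do rewrite sum_subexceedant_extend.
by rewrite exchange_big; apply: eq_bigr => g2 _; exact: sum_extend_pairs.
Qed.

Lemma bl_pairs_succ0 m : bl_pairs m.+1 0 = 0%N.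
Proof.
rewrite bl_pairs_succ big1 // => g1 _; rewrite big1 // => g2 _.
by case: #|block_leaders g1| => [|k]; rewrite /= ?mul0n ?muln0.
Qed.

Lemma bl_pairs_succS m u :
  bl_pairs m.+1 u.+1 = ((m.+1 - u) ^ 2 * bl_pairs m u + u.+1 ^ 2 * bl_pairs m u.+1)%N.
Proof.
rewrite bl_pairs_succ /bl_pairs !big_distrr -big_split; apply: eq_bigr => g1 _.
rewrite !big_distrr -big_split; apply: eq_bigr => g2 _ /=.
case: (block_leaders g1 == _); rewrite ?andbT ?andbF ?mul0n ?muln0 // mul1n eqSS.
have [-> | ne_u] := eqVneq #|block_leaders g1| u.
  by rewrite (ltn_eqF (ltnSn u)) /= mul1n mul0n muln1 muln0 !addn0.
have [-> | ne_Su] := eqVneq #|block_leaders g1| u.+1;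
  by rewrite /= mul0n muln0 ?mul1n ?muln1 ?mul0n ?muln0.
Qed.

Lemma bl_pairs0 u : bl_pairs 0 u = (u == 0%N).
Proof.
have sub0 (f : {ffun 'I_0 -> 'I_0}) : subexceedant f by apply/forallP => -[].
have bl0 (f : {ffun 'I_0 -> 'I_0}) : block_leaders f = set0 by apply/setP => -[].
rewrite /bl_pairs; under eq_bigl do rewrite sub0.
under eq_bigr do under eq_bigl do rewrite sub0.
under eq_bigr do under eq_bigr do rewrite !bl0 cards0 eqxx andbT.
by rewrite !sum_nat_const card_ffun !card_ord /= eq_sym; case: (u == 0%N).
Qed.

Lemma bl_pairs_eq0 {m u} : (m < u)%N -> bl_pairs m u = 0%N.
Proof.
move=> lt_mu; rewrite /bl_pairs big1 // => f1 _; rewrite big1 // => f2 _.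
have le_bl_m : (#|block_leaders f1| <= m)%N by rewrite -[m in (_ <= m)%N]card_ord max_card.
by rewrite (ltn_eqF (leq_ltn_trans le_bl_m lt_mu)).
Qed.

Local Open Scope ring_scope.

Section EulerOperator.

Context {R : idomainType}.
Implicit Types p q : {poly R}.

Definition euler p : {poly R} := 'X * p^`().

Lemma coef_euler p k : (euler p)`_k = k%:R * p`_k.
Proof. by rewrite coefXM coef_deriv; case: k => [|k]; rewrite ?mul0r //= mulr_natl. Qed.

Lemma eulerD p q : euler (p + q) = euler p + euler q.
Proof. by rewrite /euler derivD mulrDr. Qed.

Lemma eulerZ c p : euler (c *: p) = c *: euler p.
Proof. by rewrite /euler derivZ scalerAr. Qed.

Lemma eulerM p q : euler (p * q) = euler p * q + p * euler q.
Proof. rewrite /euler derivM; ring. Qed.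

Lemma euler_natM k p : euler (k%:R * p) = k%:R * euler p.
Proof. by rewrite /euler !mulr_natl derivMn mulrnAr. Qed.

Lemma euler_Xn k : euler 'X^k = k%:R * 'X^k.
Proof.
rewrite /euler derivXn; case: k => [|k]; first by rewrite mulr0n mulr0 mul0r.
by rewrite mulrnAr -exprS mulr_natl.
Qed.

Lemma euler_X : euler 'X = 'X.
Proof. by rewrite /euler derivX mulr1. Qed.

Lemma euler_1X : euler (1 + 'X) = 'X.
Proof. by rewrite /euler derivD derivX -polyC1 derivC add0r mulr1. Qed.

Lemma euler_1X_exp j : (1 + 'X) * euler ((1 + 'X) ^+ j) = j%:R * ('X * (1 + 'X) ^+ j).
Proof.
elim: j => [|j IHj]; first by rewrite expr0 /euler -polyC1 derivC mulr0 mulr0 mul0r.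
by rewrite exprS eulerM euler_1X mulrDr IHj -addn1 natrD; ring.
Qed.

Lemma euler2_1X_exp j :
  (1 + 'X) ^+ 2 * euler (euler ((1 + 'X) ^+ j)) =
  j%:R * ('X * (1 + 'X) ^+ j.+1) + (j%:R - 1) * j%:R * ('X ^+ 2 * (1 + 'X) ^+ j).
Proof.
set s : {poly R} := 1 + 'X; set b := s ^+ j; set d1 := euler b.
have s_d1 : s * d1 = j%:R * ('X * b) by exact: euler_1X_exp.
have := congr1 euler s_d1.
rewrite euler_natM (eulerM s) (eulerM 'X b) euler_1X euler_X -/d1 => euler_s_d1.
have s_d2 : s * euler d1 = j%:R * ('X * b) + (j%:R - 1) * ('X * d1).
  by apply: (addrI ('X * d1)); rewrite euler_s_d1; ring.
rewrite expr2 -mulrA s_d2 mulrDr [s * ((_ - 1) * _)]mulrCA [s * ('X * d1)]mulrCA s_d1.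
by rewrite (exprS s j) -/b; ring.
Qed.

(* [rec_op n p = (D + 1)^2 p + X (D - n)^2 p] with [D = euler]. *)
Definition rec_op (n : nat) p : {poly R} :=
  euler (euler p) + 2%:R * euler p + p +
  'X * (euler (euler p) - (2 * n)%:R * euler p + (n * n)%:R * p).

Lemma rec_opD n p q : rec_op n (p + q) = rec_op n p + rec_op n q.
Proof. rewrite /rec_op !eulerD; ring. Qed.

Lemma rec_opZ n c p : rec_op n (c *: p) = c *: rec_op n p.
Proof. rewrite /rec_op !eulerZ -!mul_polyC; ring. Qed.

Lemma rec_op_sum n I (r : seq I) (P : pred I) (F : I -> {poly R}) :
  rec_op n (\sum_(i <- r | P i) F i) = \sum_(i <- r | P i) rec_op n (F i).
Proof.
have rec_op0 : rec_op n 0 = 0 by have := rec_opZ n 0 0; rewrite !scale0r.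
exact: (big_morph _ (rec_opD n) rec_op0).
Qed.

Lemma coef_rec_op n p k :
  (rec_op n p)`_k = (k.+1 ^ 2)%N%:R * p`_k +
                    (if k is k'.+1 then (n%:R - k'%:R) ^+ 2 * p`_k' else 0).
Proof.
rewrite /rec_op !mulr_natl !coefD coefXM !coefD coefN !coefMn !coef_euler.
case: k => [|k] /=; rewrite ?natrM ?natrD; ring.
Qed.

Lemma rec_op_basis i j :
  rec_op (2 * i + j)%N.+1 ('X^i * (1 + 'X) ^+ j) =
  (i.+1 ^ 2)%N%:R *: ('X^i * (1 + 'X) ^+ j.+1) +
  (j * (4 * i + j + 5))%N%:R *: ('X^(i.+1) * (1 + 'X) ^+ j.-1).
Proof.
rewrite -!mul_polyC !polyC_natr.
set s : {poly R} := 1 + 'X; set a : {poly R} := 'X^i; set b := s ^+ j.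
set d1 := euler b; set d2 := euler d1.
have s_d1 : s * d1 = j%:R * ('X * b) by exact: euler_1X_exp.
have s2_d2 : s ^+ 2 * d2 = j%:R * ('X * (s * b)) + (j%:R - 1) * j%:R * ('X ^+ 2 * b).
  by rewrite -exprS; exact: euler2_1X_exp.
have euler_ab : euler (a * b) = i%:R * (a * b) + a * d1 by rewrite eulerM euler_Xn mulrA.
have euler2_ab :
    euler (euler (a * b)) = (i * i)%:R * (a * b) + (2 * i)%:R * (a * d1) + a * d2.
  rewrite euler_ab eulerD euler_natM euler_ab (eulerM a d1) euler_Xn -/a -/d2 natrM; ring.
have s_last : s * ((j * (4 * i + j + 5))%N%:R * ('X^(i.+1) * s ^+ j.-1)) =
    (j * (4 * i + j + 5))%N%:R * ('X * a * b).
  rewrite /b /a; case: j {s_d1 s2_d2 euler2_ab euler_ab d1 d2 b} => [|j].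
    by rewrite mul0n mulr0n !mul0r mulr0.
  by rewrite /= !exprS; ring.
have s_neq0 : s != 0 by rewrite -size_poly_eq0 /s addrC -polyC1 size_XaddC.
(* Derivatives of [s ^+ j] carry a factor [s ^+ j.-2]; multiplying by [s ^+ 2] clears it. *)
apply: (mulfI (expf_neq0 2 s_neq0)).
rewrite /rec_op euler2_ab euler_ab [in RHS]mulrDr expr2.
rewrite -(mulrA s s (_ * ('X^(i.+1) * _))) s_last exprS -/b -expr2.
transitivity (a * (((i.+1 * i.+1)%N%:R + 'X * ((i + j).+1 * (i + j).+1)%N%:R) * (s ^+ 2 * b) +
  (2%:R * i.+1%:R - 2%:R * 'X * (i + j).+1%:R) * (s * (s * d1)) + s * (s ^+ 2 * d2))).
  by rewrite /s; ring.
by rewrite s2_d2 s_d1 /s; ring.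
Qed.

End EulerOperator.

Definition bl_poly m : {poly rat} := \poly_(k < m) (bl_pairs m k.+1)%:R.

Lemma coef_bl_poly m k : (bl_poly m)`_k = (bl_pairs m k.+1)%:R.
Proof. by rewrite coef_poly; case: ltnP => // le_mk; rewrite bl_pairs_eq0. Qed.

Lemma bl_poly_succ m : bl_poly m.+2 = rec_op m.+1 (bl_poly m.+1).
Proof.
apply/polyP => -[|k]; rewrite coef_rec_op !coef_bl_poly.
  by rewrite bl_pairs_succS bl_pairs_succ0 muln0 add0n natrM addr0.
rewrite bl_pairs_succS natrD natrM [X in _ + X]natrM addrC !natrX.
have [le_km | lt_mk] := leqP k m.+1; first by rewrite subSS natrB.
by rewrite (bl_pairs_eq0 (leqW lt_mk)) !mulr0.
Qed.

Definition gamma_basis m i : {poly rat} := 'X^i * (1 + 'X) ^+ (m - i.*2).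

(* [gamma m i] is the coefficient of [gamma_basis m i] in [bl_poly m.+1]. *)
Fixpoint gamma m i : nat :=
  match m with
  | 0 => i == 0
  | m'.+1 => i.+1 ^ 2 * gamma m' i +
             (if i is i'.+1 then (m' - i'.*2) * (m' + i'.*2 + 5) * gamma m' i' else 0)
  end%N.

Lemma gamma_eq0 m i : (m < i.*2)%N -> gamma m i = 0%N.
Proof.
elim: m i => [|m IHm] [|i] //= lt_mi.
rewrite IHm ?muln0 ?add0n; last exact: ltnW.
have [lt_m_i2 | ge_m_i2] := ltnP m i.*2; first by rewrite IHm ?muln0.
by rewrite doubleS !ltnS in lt_mi; rewrite (_ : m - i.*2 = 0)%N ?mul0n //; lia.
Qed.

Lemma rec_op_gamma_basis m i : (i.*2 <= m)%N ->
  rec_op m.+1 (gamma_basis m i) =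
  (i.+1 ^ 2)%N%:R *: gamma_basis m.+1 i +
  ((m - i.*2) * (m + i.*2 + 5))%N%:R *: gamma_basis m.+1 i.+1.
Proof.
move=> le_i2_m; rewrite /gamma_basis; set j := (m - i.*2)%N.
have -> : (m.+1 - i.*2 = j.+1)%N by rewrite /j; lia.
have -> : (m.+1 - i.+1.*2 = j.-1)%N by rewrite /j; lia.
have -> : (m + i.*2 + 5 = 4 * i + j + 5)%N by rewrite /j; lia.
by rewrite (_ : m = 2 * i + j)%N ?rec_op_basis //; rewrite /j; lia.
Qed.

Lemma bl_poly_gamma m :
  bl_poly m.+1 = \sum_(i < m.+1) (gamma m i)%:R *: gamma_basis m i.
Proof.
elim: m => [|m IHm].
  by rewrite /bl_poly poly_def !big_ord1 /gamma_basis bl_pairs_succS !bl_pairs0 /= expr0 mulr1.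
rewrite bl_poly_succ IHm rec_op_sum.
under eq_bigr do rewrite rec_opZ.
transitivity (\sum_(i < m.+1)
  ((i.+1 ^ 2 * gamma m i)%N%:R *: gamma_basis m.+1 i +
   ((m - i.*2) * (m + i.*2 + 5) * gamma m i)%N%:R *: gamma_basis m.+1 i.+1)).
  apply: eq_bigr => i _; have [le_i2_m | lt_m_i2] := leqP i.*2 m.
    by rewrite rec_op_gamma_basis // scalerDr !scalerA -!natrM !(mulnC (gamma m i)).
  by rewrite gamma_eq0 // !muln0 !scale0r addr0.
under [in RHS]eq_bigr do rewrite /= natrD scalerDl.
rewrite !big_split /=; congr (_ + _).
  rewrite [in RHS]big_ord_recr /= gamma_eq0 ?muln0 ?scale0r ?addr0 //; lia.
by rewrite [in RHS]big_ord_recl /= scale0r add0r.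
Qed.

Lemma bl_poly_gamma_half m :
  bl_poly m.+1 = \sum_(i < m./2.+1) (gamma m i)%:R *: gamma_basis m i.
Proof.
have le_half : (m./2.+1 <= m.+1)%N by rewrite ltnS -divn2 leq_div.
rewrite bl_poly_gamma (big_ord_widen _ (fun i => (gamma m i)%:R *: gamma_basis m i) le_half).
rewrite [in RHS]big_mkcond /=.
apply: eq_bigr => i _; case: ifP => // /negbT; rewrite -leqNgt => lt_half_i.
by rewrite gamma_eq0 ?scale0r // -ltn_half_double.
Qed.

Theorem mainTheorem16 (n : nat) (hn : (2 <= n)%N) :
  exists gamma : nat -> rat,
    (forall i, 0 <= gamma i) /\
    \sum_(k < n) (A2 n k)%:R *: 'X^k =
    \sum_(i < (n.-1)./2.+1) gamma i *: ('X^i * (1 + 'X) ^+ (n.-1 - i.*2)%N)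
      :> {poly rat}.
Proof.
case: n hn => [|m] // _; exists (fun i => (gamma m i)%:R); split=> [i | ].
  exact: ler0n.
have -> : \sum_(k < m.+1) (A2 m.+1 k)%:R *: 'X^k = bl_poly m.+1.
  by rewrite /bl_poly poly_def; apply: eq_bigr => k _; rewrite A2_bl_pairs.
exact: bl_poly_gamma_half.
Qed.
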